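(* For the discrete series representations $\omega_{\ell,\pm}$ ($\ell>1/2$), the localisation of the Dirac operator $D$ has zero kernel. For a principal series representation $\pi_{q,\tau}$ ($q\ge1/4$, $0\le\tau\le1$), the localisation of $D$ at $\pi_{q,\tau}$ (acting on $V_{q,\tau}\oplus V_{q,\tau}$) has nonzero kernel if and only if $(q,\tau)$ lies on the parabolic arc \[ \mathcal{Q}=\{(q,\tau): q+2\tau(\tau-1)=0,\ \tau\in[1/2-1/\sqrt8,\ 1/2+1/\sqrt8]\}. \] At each $(q,\tau)\in\mathcal{Q}$ the kernel (the Dirac cohomology localised at $\pi_{q,\tau}$) is one-dimensional, spanned by the 2-spinor \[ \sqrt{1-\tau}\begin{pmatrix} f_\tau\\ 0\end{pmatrix}-\sqrt{\tau}\begin{pmatrix} 0\\ f_{\tau-1}\end{pmatrix}. \]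
   Context: $G$ is the universal cover of $\mathrm{SL}_2(\mathbb{R})$, $\mathfrak{A}=C^*_r(G)$, $X_0,X_1,X_2$ an orthonormal basis of $\mathfrak{sl}_2(\mathbb{R})$ acting on functions on $G$ as right-invariant vector fields. The Dirac operator is $D=i\begin{pmatrix}X_0& X_1+iX_2\\ X_1-iX_2& -X_0\end{pmatrix}$, an unbounded operator on the Hilbert $\mathfrak{A}$-module $\mathfrak{A}\oplus\mathfrak{A}$. The localisation of $D$ at a representation $(V,\pi)$ in the reduced dual is $D\otimes1$ on $(\mathfrak{A}\oplus\mathfrak{A})\otimes_{\mathfrak{A}}V\cong V\oplus V$; it equals $-\mathbb{H}$, where, with $H_k$ defined by $\exp(-itH_k)=\pi(\exp(tX_k))$ and $H_\pm=H_1\pm iH_2$, $\mathbb{H}=\begin{pmatrix}H_0&H_+\\H_-&-H_0\end{pmatrix}$. The principal series $\pi_{q,\tau}$ on $V_{q,\tau}$ ($q\ge1/4$, $0\le\tau\le1$, Casimir value $q$) has orthonormal basis $f_m$, $m\in\tau+\mathbb{Z}$, with $H_0f_m=mf_m$, $H_+f_m=(q+m(m+1))^{1/2}f_{m+1}$, $H_-f_m=(q+m(m-1))^{1/2}f_{m-1}$. The discrete series $\omega_{\ell,+}$ (resp. $\omega_{\ell,-}$), $\ell>1/2$, with Casimir value $q=\ell(1-\ell)$, has orthonormal basis $f_m$, $m\in\{\ell,\ell+1,\dots\}$ (resp. $m\in\{-\ell,-\ell-1,\dots\}$), with the same formulas except $H_-f_\ell=0$ and $H_+f_{-\ell}=0$.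 *)

From Stdlib Require Import Reals Lra ZArith Bool.
Open Scope R_scope.

Record Cplx := mkC { Re : R; Im : R }.
Definition C0 : Cplx := mkC 0 0.
Definition Cadd (z w : Cplx) : Cplx := mkC (Re z + Re w) (Im z + Im w).
Definition Copp (z : Cplx) : Cplx := mkC (- Re z) (- Im z).
Definition Cmul (z w : Cplx) : Cplx :=
  mkC (Re z * Re w - Im z * Im w) (Re z * Im w + Im z * Re w).
Definition RCmul (r : R) (z : Cplx) : Cplx := mkC (r * Re z) (r * Im z).
Definition Cnorm2 (z : Cplx) : R := Re z ^ 2 + Im z ^ 2.

(* A vector of V is given by its coefficients in the orthonormal basis (f_m):
   the coefficient of index n : Z is the coefficient of f_{m_n}, where
   m_n = base + n.  The basis is indexed by those n with I n = true:
     principal series pi_{q,tau} : base = tau,  I = all of Z;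
     discrete series omega_{l,+} : base = l,    I = {n >= 0};
     discrete series omega_{l,-} : base = -l,   I = {n <= 0}. *)
Definition coeffs := Z -> Cplx.

Definition weight (base : R) (n : Z) : R := base + IZR n.

Definition supported (I : Z -> bool) (v : coeffs) : Prop :=
  forall n, I n = false -> v n = C0.

Definition sq_summable (v : coeffs) : Prop :=
  exists M, forall N : nat,
    sum_f_R0 (fun k => Cnorm2 (v (Z.of_nat k)) + Cnorm2 (v (- Z.of_nat k))%Z) N <= M.

Definition inV (I : Z -> bool) (v : coeffs) : Prop := supported I v /\ sq_summable v.

Definition H0 (base : R) (I : Z -> bool) (v : coeffs) : coeffs :=
  fun n => if I n then RCmul (weight base n) (v n) else C0.

(* H_+ f_m = (q + m(m+1))^{1/2} f_{m+1}  (zero if f_{m+1} is not a basis vector) *)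
Definition Hplus (q base : R) (I : Z -> bool) (v : coeffs) : coeffs :=
  fun n => if I n && I (n - 1)%Z then
             RCmul (sqrt (q + weight base (n - 1) * (weight base (n - 1) + 1))) (v (n - 1)%Z)
           else C0.

(* H_- f_m = (q + m(m-1))^{1/2} f_{m-1}  (zero if f_{m-1} is not a basis vector) *)
Definition Hminus (q base : R) (I : Z -> bool) (v : coeffs) : coeffs :=
  fun n => if I n && I (n + 1)%Z then
             RCmul (sqrt (q + weight base (n + 1) * (weight base (n + 1) - 1))) (v (n + 1)%Z)
           else C0.

Definition vadd (u v : coeffs) : coeffs := fun n => Cadd (u n) (v n).
Definition vopp (u : coeffs) : coeffs := fun n => Copp (u n).
Definition vscale (c : Cplx) (u : coeffs) : coeffs := fun n => Cmul c (u n).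
Definition vzero : coeffs := fun _ => C0.

Definition bbH (q base : R) (I : Z -> bool) (psi : coeffs * coeffs) : coeffs * coeffs :=
  let (a, b) := psi in
  (vadd (H0 base I a) (Hplus q base I b), vadd (Hminus q base I a) (vopp (H0 base I b))).

(* localisation of the Dirac operator: D (x) 1 = - bold H *)
Definition Dloc (q base : R) (I : Z -> bool) (psi : coeffs * coeffs) : coeffs * coeffs :=
  let (x, y) := bbH q base I psi in (vopp x, vopp y).

Definition in_kernel (q base : R) (I : Z -> bool) (psi : coeffs * coeffs) : Prop :=
  inV I (fst psi) /\ inV I (snd psi) /\ Dloc q base I psi = (vzero, vzero).

Definition I_all : Z -> bool := fun _ => true.
Definition I_pos : Z -> bool := fun n => (0 <=? n)%Z.
Definition I_neg : Z -> bool := fun n => (n <=? 0)%Z.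

Definition onArcQ (q tau : R) : Prop :=
  q + 2 * tau * (tau - 1) = 0 /\ 1/2 - 1 / sqrt 8 <= tau <= 1/2 + 1 / sqrt 8.

(* the spinor sqrt(1-tau) (f_tau, 0) - sqrt(tau) (0, f_{tau-1}) ;
   f_tau has index 0 and f_{tau-1} index -1 when base = tau *)
Definition psi0 (tau : R) : coeffs * coeffs :=
  (fun n => if (n =? 0)%Z then mkC (sqrt (1 - tau)) 0 else C0,
   fun n => if (n =? -1)%Z then mkC (- sqrt tau) 0 else C0).

(* The kernel equations of [Dloc] only couple the coefficient of f_m in the first
   component with that of f_{m-1} in the second.  With s = (q + m(m-1))^{1/2} each such
   pair (u, v) solves the real 2x2 system  m u + s v = 0,  s u - (m-1) v = 0,  whose
   determinant is -(q + 2m(m-1)).  For the discrete series this determinant never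
   vanishes and the end of the weight ladder forces the remaining coefficient to be 0;
   for the principal series it vanishes only for m = tau and only when
   q + 2 tau(tau-1) = 0, i.e. on the arc Q, where the single surviving pair is
   proportional to (sqrt(1-tau), -sqrt tau). *)

From Stdlib Require Import Reals ZArith.
From Stdlib Require Import Lra Lia FunctionalExtensionality.
Open Scope R_scope.

Lemma Cext (z w : Cplx) : Re z = Re w -> Im z = Im w -> z = w.
Proof. destruct z, w; simpl; intros; subst; reflexivity. Qed.

Lemma Cnorm2_ge0 (z : Cplx) : 0 <= Cnorm2 z.
Proof. unfold Cnorm2; nra. Qed.

Lemma Cnorm2_C0 : Cnorm2 C0 = 0.
Proof. unfold Cnorm2, C0; simpl; ring. Qed.

Lemma Copp_eq0 (z : Cplx) : Copp z = C0 -> z = C0.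
Proof. destruct z as [r i]; unfold Copp, C0; intros E; injection E; intros; apply Cext; simpl; lra. Qed.

Lemma Cmul_real (c : Cplx) (r : R) : Cmul c (mkC r 0) = RCmul r c.
Proof. apply Cext; simpl; ring. Qed.

Lemma RCmul_eq0 (r : R) (z : Cplx) : r <> 0 -> RCmul r z = C0 -> z = C0.
Proof.
  destruct z as [zr zi]; unfold RCmul, C0; simpl; intros Hr E; injection E as Er Ei.
  apply Cext; simpl.
  - destruct (Rmult_integral _ _ Er); [contradiction | assumption].
  - destruct (Rmult_integral _ _ Ei); [contradiction | assumption].
Qed.

Lemma real_system_trivial (al be ga de u v : R) : al * de - be * ga <> 0 ->
  al * u + be * v = 0 -> ga * u + de * v = 0 -> u = 0 /\ v = 0.
Proof.
  intros Hdet E1 E2.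
  assert (Eu : (al * de - be * ga) * u = de * (al * u + be * v) - be * (ga * u + de * v)) by ring.
  assert (Ev : (al * de - be * ga) * v = al * (ga * u + de * v) - ga * (al * u + be * v)) by ring.
  rewrite E1, E2, !Rmult_0_r, Rminus_0_r in Eu, Ev.
  split; [destruct (Rmult_integral _ _ Eu) | destruct (Rmult_integral _ _ Ev)]; tauto.
Qed.

Lemma complex_system_trivial (al be ga de : R) (u v : Cplx) : al * de - be * ga <> 0 ->
  Cadd (RCmul al u) (RCmul be v) = C0 -> Cadd (RCmul ga u) (RCmul de v) = C0 ->
  u = C0 /\ v = C0.
Proof.
  destruct u as [ur ui], v as [vr vi]; unfold Cadd, RCmul, C0; simpl.
  intros Hdet E1 E2; injection E1 as E1r E1i; injection E2 as E2r E2i.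
  destruct (real_system_trivial _ _ _ _ ur vr Hdet E1r E2r).
  destruct (real_system_trivial _ _ _ _ ui vi Hdet E1i E2i).
  subst; split; reflexivity.
Qed.

Lemma sum_f_R0_le_support (f : nat -> R) (K N : nat) :
  (forall k, 0 <= f k) -> (forall k, (K < k)%nat -> f k = 0) ->
  sum_f_R0 f N <= sum_f_R0 f K.
Proof.
  intros Hpos Hsupp. destruct (lt_eq_lt_dec N K) as [[HNK | ->] | HKN].
  - rewrite (tech2 f N K HNK).
    pose proof (cond_pos_sum (fun i => f (S N + i)%nat) (K - S N) (fun i => Hpos _)); lra.
  - lra.
  - rewrite (tech2 f K N HKN), (sum_eq_R0 (fun i => f (S K + i)%nat)); [lra | intros; apply Hsupp; lia].
Qed.

Lemma sq_summable_finite_support (K : nat) (v : coeffs) :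
  (forall n, (Z.of_nat K < Z.abs n)%Z -> v n = C0) -> sq_summable v.
Proof.
  intros Hv. set (f := fun k => Cnorm2 (v (Z.of_nat k)) + Cnorm2 (v (- Z.of_nat k)%Z)).
  exists (sum_f_R0 f K); intro N; apply sum_f_R0_le_support.
  - intro k; pose proof (Cnorm2_ge0 (v (Z.of_nat k))); pose proof (Cnorm2_ge0 (v (- Z.of_nat k)%Z)).
    unfold f; lra.
  - intros k Hk; unfold f; rewrite !Hv, Cnorm2_C0 by lia; ring.
Qed.

Lemma vzero_pair (a b : coeffs) :
  (forall n, a n = C0 /\ b (n - 1)%Z = C0) -> (a, b) = (vzero, vzero).
Proof.
  intros H; f_equal; apply functional_extensionality; intro n; unfold vzero.
  - exact (proj1 (H n)).
  - replace n with (n + 1 - 1)%Z by lia; exact (proj2 (H (n + 1)%Z)).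
Qed.

Lemma Dloc_zero_iff (q base : R) (I : Z -> bool) (a b : coeffs) :
  Dloc q base I (a, b) = (vzero, vzero) <->
  forall n, Cadd (H0 base I a n) (Hplus q base I b n) = C0 /\
            Cadd (Hminus q base I a n) (Copp (H0 base I b n)) = C0.
Proof.
  unfold Dloc, bbH, vopp, vadd, vzero; split.
  - intros E n; injection E as E1 E2.
    split; apply Copp_eq0; [exact (f_equal (fun f => f n) E1) | exact (f_equal (fun f => f n) E2)].
  - intros H; f_equal; apply functional_extensionality; intro n;
      [rewrite (proj1 (H n)) | rewrite (proj2 (H n))]; apply Cext; simpl; ring.
Qed.

Lemma kernel_pair_vanishes (q base : R) (I : Z -> bool) (a b : coeffs) (n : Z) :
  Dloc q base I (a, b) = (vzero, vzero) -> I n = true -> I (n - 1)%Z = true ->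
  0 <= q + weight base n * (weight base n - 1) ->
  q + 2 * weight base n * (weight base n - 1) <> 0 ->
  a n = C0 /\ b (n - 1)%Z = C0.
Proof.
  intros Hker In In1 Hpos Hdet.
  destruct (proj1 (Dloc_zero_iff _ _ _ _ _) Hker n) as [Etop _].
  destruct (proj1 (Dloc_zero_iff _ _ _ _ _) Hker (n - 1)%Z) as [_ Ebot].
  unfold H0, Hplus, Hminus in Etop, Ebot.
  replace (n - 1 + 1)%Z with n in Ebot by lia.
  rewrite In, In1 in Etop, Ebot; simpl in Etop, Ebot.
  set (m := weight base n) in *.
  assert (Em : weight base (n - 1) = m - 1) by (unfold m, weight; rewrite minus_IZR; ring).
  rewrite Em in Etop, Ebot; rewrite (ltac:(ring) : m - 1 + 1 = m), (Rmult_comm (m - 1) m) in Etop.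
  replace (Copp (RCmul (m - 1) (b (n - 1)%Z))) with (RCmul (- (m - 1)) (b (n - 1)%Z)) in Ebot
    by (apply Cext; simpl; ring).
  set (s := sqrt (q + m * (m - 1))) in *.
  assert (Hs : s * s = q + m * (m - 1)) by (apply sqrt_sqrt; exact Hpos).
  apply (complex_system_trivial m s s (- (m - 1))); [| exact Etop | exact Ebot].
  rewrite Hs; intro E; apply Hdet; lra.
Qed.

Lemma discrete_plus_kernel_trivial (l : R) (psi : coeffs * coeffs) : l > 1/2 ->
  in_kernel (l * (1 - l)) l I_pos psi -> psi = (vzero, vzero).
Proof.
  destruct psi as [a b]; intros Hl [[Sa _] [[Sb _] Hker]]; simpl in Sa, Sb.
  assert (Hout : forall n, (n < 0)%Z -> I_pos n = false) by (intros; apply Z.leb_gt; lia).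
  assert (A0 : a 0%Z = C0).
  { destruct (proj1 (Dloc_zero_iff _ _ _ _ _) Hker 0%Z) as [Etop _].
    unfold H0, Hplus, I_pos, weight in Etop; simpl in Etop.
    apply (RCmul_eq0 (l + 0)); [lra |].
    rewrite <- Etop; apply Cext; simpl; ring. }
  apply vzero_pair; intro n.
  destruct (Z_lt_le_dec n 0) as [Hn | Hn]; [split; [apply Sa | apply Sb]; apply Hout; lia |].
  destruct (Z.eq_dec n 0) as [-> | Hn0]; [split; [exact A0 | apply Sb, Hout; lia] |].
  assert (Hn1 : 1 <= IZR n) by (apply IZR_le; lia).
  apply kernel_pair_vanishes with (q := l * (1 - l)) (base := l) (I := I_pos);
    unfold I_pos, weight; try (apply Z.leb_le; lia); auto; nra.
Qed.

Lemma discrete_minus_kernel_trivial (l : R) (psi : coeffs * coeffs) : l > 1/2 ->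
  in_kernel (l * (1 - l)) (- l) I_neg psi -> psi = (vzero, vzero).
Proof.
  destruct psi as [a b]; intros Hl [[Sa _] [[Sb _] Hker]]; simpl in Sa, Sb.
  assert (Hout : forall n, (0 < n)%Z -> I_neg n = false) by (intros; apply Z.leb_gt; lia).
  assert (B0 : b 0%Z = C0).
  { destruct (proj1 (Dloc_zero_iff _ _ _ _ _) Hker 0%Z) as [_ Ebot].
    unfold H0, Hminus, I_neg, weight in Ebot; simpl in Ebot.
    apply (RCmul_eq0 (- l + 0)); [lra |].
    apply Copp_eq0; rewrite <- Ebot; apply Cext; simpl; ring. }
  apply vzero_pair; intro n.
  destruct (Z_lt_le_dec 0 n) as [Hn | Hn].
  - split; [apply Sa, Hout; lia |].
    destruct (Z.eq_dec n 1) as [-> | Hn1]; [exact B0 | apply Sb, Hout; lia].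
  - assert (Hn' : IZR n <= 0) by (apply IZR_le; lia).
    apply kernel_pair_vanishes with (q := l * (1 - l)) (base := - l) (I := I_neg);
      unfold I_neg, weight; try (apply Z.leb_le; lia); auto; nra.
Qed.

Lemma principal_pair_vanishes (q tau : R) (a b : coeffs) (n : Z) : q >= 1/4 -> 0 <= tau <= 1 ->
  Dloc q tau I_all (a, b) = (vzero, vzero) ->
  (n <> 0%Z \/ q + 2 * tau * (tau - 1) <> 0) -> a n = C0 /\ b (n - 1)%Z = C0.
Proof.
  intros Hq Ht Hker Hn; apply (kernel_pair_vanishes _ _ _ _ _ _ Hker); try reflexivity;
    unfold weight.
  - pose proof (pow2_ge_0 (tau + IZR n - 1/2)); nra.
  - destruct (Z.eq_dec n 0) as [-> | Hn0].
    + destruct Hn as [Hn | Hn]; [congruence |]. rewrite Rplus_0_r; exact Hn.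
    + destruct (Z_lt_le_dec n 0).
      * assert (IZR n <= -1) by (apply IZR_le; lia); nra.
      * assert (1 <= IZR n) by (apply IZR_le; lia); nra.
Qed.

Lemma onArcQ_of_parabola (q tau : R) : q >= 1/4 -> q + 2 * tau * (tau - 1) = 0 -> onArcQ q tau.
Proof.
  intros Hq He; split; [exact He |].
  assert (H8 : 0 < sqrt 8) by (apply sqrt_lt_R0; lra).
  assert (Hs : sqrt 8 * sqrt 8 = 8) by (apply sqrt_sqrt; lra).
  set (r := 1 / sqrt 8).
  assert (Hr : 0 < r) by (unfold r; apply Rdiv_lt_0_compat; lra).
  assert (Hr2 : r * r = 1/8).
  { unfold r; replace (1 / sqrt 8 * (1 / sqrt 8)) with (1 / (sqrt 8 * sqrt 8)) by (field; lra).
    rewrite Hs; lra. }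
  split; nra.
Qed.

Lemma arc_sqrt (q tau : R) : 0 <= tau <= 1 -> q + 2 * tau * (tau - 1) = 0 ->
  sqrt (q + tau * (tau - 1)) = sqrt tau * sqrt (1 - tau).
Proof.
  intros Ht He; rewrite <- sqrt_mult by lra; f_equal; lra.
Qed.

Lemma psi0_scaled_in_kernel (q tau : R) (c : Cplx) : 0 <= tau <= 1 ->
  q + 2 * tau * (tau - 1) = 0 ->
  in_kernel q tau I_all (vscale c (fst (psi0 tau)), vscale c (snd (psi0 tau))).
Proof.
  intros Ht He.
  pose proof (arc_sqrt q tau Ht He) as Hs.
  assert (Hx : sqrt tau * sqrt tau = tau) by (apply sqrt_sqrt; lra).
  assert (Hy : sqrt (1 - tau) * sqrt (1 - tau) = 1 - tau) by (apply sqrt_sqrt; lra).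
  set (x := sqrt tau) in *; set (y := sqrt (1 - tau)) in *.
  split; [| split]; simpl.
  - split; [intros n Hn; discriminate |].
    apply (sq_summable_finite_support 1); intros n Hn; unfold vscale.
    destruct (Z.eqb_spec n 0); [lia | apply Cext; simpl; ring].
  - split; [intros n Hn; discriminate |].
    apply (sq_summable_finite_support 1); intros n Hn; unfold vscale.
    destruct (Z.eqb_spec n (-1)); [lia | apply Cext; simpl; ring].
  - apply Dloc_zero_iff; intro n.
    unfold H0, Hplus, Hminus, I_all, vscale, weight; simpl; fold x y.
    destruct (Z.eq_dec n 0) as [-> | Hn0]; [| destruct (Z.eq_dec n (-1)) as [-> | Hn1]]; simpl.
    + replace (q + (tau + -1) * (tau + -1 + 1)) with (q + tau * (tau - 1)) by ring.
      rewrite Hs, (ltac:(lra) : tau + 0 = x * x).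
      split; apply Cext; simpl; ring.
    + replace (q + (tau + 0) * (tau + 0 - 1)) with (q + tau * (tau - 1)) by ring.
      rewrite Hs, (ltac:(lra) : tau + -1 = - (y * y)).
      split; apply Cext; simpl; ring.
    + rewrite (proj2 (Z.eqb_neq n 0) Hn0), (proj2 (Z.eqb_neq n (-1)) Hn1),
        (proj2 (Z.eqb_neq (n - 1) (-1)) (ltac:(lia))), (proj2 (Z.eqb_neq (n + 1) 0) (ltac:(lia))).
      split; apply Cext; simpl; ring.
Qed.

Lemma arc_kernel_spanned (q tau : R) (psi : coeffs * coeffs) : q >= 1/4 -> 0 <= tau <= 1 ->
  q + 2 * tau * (tau - 1) = 0 -> in_kernel q tau I_all psi ->
  exists c, psi = (vscale c (fst (psi0 tau)), vscale c (snd (psi0 tau))).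
Proof.
  destruct psi as [a b]; intros Hq Ht He [_ [_ Hker]].
  pose proof (arc_sqrt q tau Ht He) as Hs.
  destruct (proj1 (Dloc_zero_iff _ _ _ _ _) Hker 0%Z) as [Etop _].
  destruct (proj1 (Dloc_zero_iff _ _ _ _ _) Hker (-1)%Z) as [_ Ebot].
  unfold H0, Hplus, Hminus, I_all, weight in Etop, Ebot; simpl in Etop, Ebot.
  rewrite (ltac:(ring) : q + (tau + -1) * (tau + -1 + 1) = q + tau * (tau - 1)), Hs in Etop.
  rewrite (ltac:(ring) : q + (tau + 0) * (tau + 0 - 1) = q + tau * (tau - 1)), Hs in Ebot.
  assert (Hx : sqrt tau * sqrt tau = tau) by (apply sqrt_sqrt; lra).
  assert (Hy : sqrt (1 - tau) * sqrt (1 - tau) = 1 - tau) by (apply sqrt_sqrt; lra).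
  set (x := sqrt tau) in *; set (y := sqrt (1 - tau)) in *.
  (* psi0 has unit norm, so c is the inner product of psi with it *)
  exists (Cadd (RCmul y (a 0%Z)) (RCmul (- x) (b (-1)%Z))).
  f_equal; apply functional_extensionality; intro n; unfold vscale, psi0; simpl; fold x y.
  - destruct (Z.eqb_spec n 0) as [-> | Hn].
    + rewrite Cmul_real; destruct (a 0%Z) as [ar ai], (b (-1)%Z) as [br bi].
      injection Etop as Er Ei; apply Cext; simpl.
      * assert (y * y * ar = (1 - tau) * ar) by (rewrite Hy; ring); lra.
      * assert (y * y * ai = (1 - tau) * ai) by (rewrite Hy; ring); lra.
    + rewrite (proj1 (principal_pair_vanishes q tau a b n Hq Ht Hker (or_introl Hn))).
      apply Cext; simpl; ring.
  - destruct (Z.eqb_spec n (-1)) as [-> | Hn].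
    + rewrite Cmul_real; destruct (a 0%Z) as [ar ai], (b (-1)%Z) as [br bi].
      injection Ebot as Er Ei; apply Cext; simpl.
      * assert (x * x * br = tau * br) by (rewrite Hx; ring); lra.
      * assert (x * x * bi = tau * bi) by (rewrite Hx; ring); lra.
    + replace n with (n + 1 - 1)%Z by lia.
      assert (Hn1 : (n + 1 <> 0)%Z) by lia.
      rewrite (proj2 (principal_pair_vanishes q tau a b (n + 1) Hq Ht Hker (or_introl Hn1))).
      apply Cext; simpl; ring.
Qed.

Lemma psi0_neq0 (tau : R) : 0 <= tau <= 1 -> psi0 tau <> (vzero, vzero).
Proof.
  intros Ht E; injection E as Ea Eb.
  apply (f_equal (fun f => Re (f 0%Z))) in Ea; apply (f_equal (fun f => Re (f (-1)%Z))) in Eb.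
  simpl in Ea, Eb.
  apply sqrt_eq_0 in Ea; [| lra]. apply Ropp_eq_0_compat in Eb; rewrite Ropp_involutive in Eb.
  apply sqrt_eq_0 in Eb; lra.
Qed.

Lemma vscale_one (v : coeffs) : vscale (mkC 1 0) v = v.
Proof. apply functional_extensionality; intro n; apply Cext; simpl; ring. Qed.

Theorem mainTheorem13 :
  (forall l : R, l > 1/2 ->
     (forall psi, in_kernel (l * (1 - l)) l I_pos psi -> psi = (vzero, vzero)) /\
     (forall psi, in_kernel (l * (1 - l)) (- l) I_neg psi -> psi = (vzero, vzero))) /\
  (forall q tau : R, q >= 1/4 -> 0 <= tau <= 1 ->
     ((exists psi, in_kernel q tau I_all psi /\ psi <> (vzero, vzero)) <-> onArcQ q tau) /\
     (onArcQ q tau ->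
        psi0 tau <> (vzero, vzero) /\
        forall psi, in_kernel q tau I_all psi <->
          exists c : Cplx, psi = (vscale c (fst (psi0 tau)), vscale c (snd (psi0 tau))))).
Proof.
  split.
  - intros l Hl; split; intro psi.
    + exact (discrete_plus_kernel_trivial l psi Hl).
    + exact (discrete_minus_kernel_trivial l psi Hl).
  - intros q tau Hq Ht; split; [split |].
    + intros [[a b] [[_ [_ Hker]] Hne]].
      destruct (Req_dec (q + 2 * tau * (tau - 1)) 0) as [He | He].
      * exact (onArcQ_of_parabola q tau Hq He).
      * exfalso; apply Hne, vzero_pair; intro n.
        exact (principal_pair_vanishes q tau a b n Hq Ht Hker (or_intror He)).
    + intros [He _]; exists (psi0 tau); split; [| exact (psi0_neq0 tau Ht)].
      pose proof (psi0_scaled_in_kernel q tau (mkC 1 0) Ht He) as Hk.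
      rewrite !vscale_one in Hk; destruct (psi0 tau); exact Hk.
    + intros [He _]; split; [exact (psi0_neq0 tau Ht) | intro psi; split].
      * exact (arc_kernel_spanned q tau psi Hq Ht He).
      * intros [c ->]; exact (psi0_scaled_in_kernel q tau c Ht He).
Qed.
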